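(* Let $B:\mathbb{Z}\times\mathbb{Z}\to\mathbb{R}$ be defined by the recurrence $$B(r,s)=\begin{cases}1 & s\le 0,\\ 0 & s>0 \text{ and } r<s,\\ \min\Big(\tfrac12\big[B(r-1,s)+B(r-1,s-1)\big],\ B(r-2,s-1)\Big) & \text{otherwise.}\end{cases}$$ Then for all integers $c\ge 3$ and $s\ge 2$, $B(cs-1,s)\ge 1-\frac{1}{2^{c-1}}$. *)

From Stdlib Require Import Reals Lra Lia ZArith.
Open Scope R_scope.

Fixpoint Bf (n : nat) (r s : Z) : R :=
  match n with
  | O => 0
  | S n' =>
      if Z.leb s 0 then 1
      else if Z.ltb r s then 0
      else Rmin ((Bf n' (r - 1) s + Bf n' (r - 1) (s - 1)) / 2)
                (Bf n' (r - 2) (s - 1))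
  end.

(* B(r,s): fuel r+1 suffices, since recursion only happens when r >= s >= 1
   and every recursive call decreases r. See B_eq below. *)
Definition B (r s : Z) : R := Bf (S (Z.to_nat r)) r s.

Lemma Bf_stable : forall n m r s,
  (Z.to_nat r < n)%nat -> (Z.to_nat r < m)%nat -> Bf n r s = Bf m r s.
Proof.
  induction n as [|n IH]; intros m r s Hn Hm; [lia|].
  destruct m as [|m]; [lia|].
  cbn [Bf]. destruct (Z.leb s 0) eqn:E1; [reflexivity|].
  destruct (Z.ltb r s) eqn:E2; [reflexivity|].
  apply Z.leb_gt in E1. apply Z.ltb_ge in E2.
  rewrite (IH m (r-1)%Z s) by lia.
  rewrite (IH m (r-1)%Z (s-1)%Z) by lia.
  rewrite (IH m (r-2)%Z (s-1)%Z) by lia.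
  reflexivity.
Qed.

Lemma B_eq : forall r s : Z,
  B r s = if Z.leb s 0 then 1
          else if Z.ltb r s then 0
          else Rmin ((B (r - 1) s + B (r - 1) (s - 1)) / 2) (B (r - 2) (s - 1)).
Proof.
  intros r s. unfold B at 1. cbn [Bf].
  destruct (Z.leb s 0) eqn:E1; [reflexivity|].
  destruct (Z.ltb r s) eqn:E2; [reflexivity|].
  apply Z.leb_gt in E1. apply Z.ltb_ge in E2.
  unfold B.
  rewrite (Bf_stable _ (S (Z.to_nat (r-1))) (r-1)%Z s) by lia.
  rewrite (Bf_stable _ (S (Z.to_nat (r-1))) (r-1)%Z (s-1)%Z) by lia.
  rewrite (Bf_stable _ (S (Z.to_nat (r-2))) (r-2)%Z (s-1)%Z) by lia.
  reflexivity.
Qed.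

(* Write r - 2s + 2 for the "excess" of (r, s).  For x > 1/2 and
   x^2 <= y (2x - 1) (which forces y >= 1), the function x^(r-2s+2) y^s, with
   the excess clipped at 0, is a supersolution of the recurrence satisfied by
   1 - B: averaging the bounds at (r-1, s) and (r-1, s-1) costs exactly the
   inequality x^2 <= y (2x - 1), and the bound at (r-2, s-1) is smaller by the
   factor y >= 1.  On the diagonal r = cs - 1 the excess is (c - 2) s + 1, so
   1 - B(cs - 1, s) <= x (x^(c-2) y)^s.  The choices (x, y) = (3/4, 9/8),
   (2/3, 4/3) and (5/8, 25/16) give the theorem for c = 3, c = 4 and c >= 5
   respectively, except for finitely many small (c, s), which are settled by
   exact rational evaluation of B. *)

From Stdlib Require Import Reals ZArith QArith Qreals Lra Lia.
Open Scope R_scope.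

Lemma Bf_nonneg n r s : 0 <= Bf n r s.
Proof.
  revert r s; induction n as [|n IH]; intros r s; cbn [Bf]; [lra|].
  destruct (Z.leb s 0); [lra|]; destruct (Z.ltb r s); [lra|].
  apply Rmin_glb; [|apply IH].
  pose proof (IH (r - 1)%Z s); pose proof (IH (r - 1)%Z (s - 1)%Z); lra.
Qed.

Lemma B_nonneg r s : 0 <= B r s.
Proof. apply Bf_nonneg. Qed.

(* [Qred] keeps the rationals small enough for [vm_compute]. *)
Fixpoint BfQ (n : nat) (r s : Z) : Q :=
  match n with
  | O => 0%Q
  | S n' =>
      if Z.leb s 0 then 1%Q
      else if Z.ltb r s then 0%Q
      else let a := Qred ((BfQ n' (r - 1) s + BfQ n' (r - 1) (s - 1)) * (1 # 2))%Q in
           let b := BfQ n' (r - 2) (s - 1) in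
           if Qle_bool a b then a else b
  end.

Definition BQ (r s : Z) : Q := BfQ (S (Z.to_nat r)) r s.

Lemma Bf_Q2R n r s : Bf n r s = Q2R (BfQ n r s).
Proof.
  revert r s; induction n as [|n IH]; intros r s; cbn [Bf BfQ].
  - unfold Q2R; simpl; lra.
  - destruct (Z.leb s 0); [unfold Q2R; simpl; lra|].
    destruct (Z.ltb r s); [unfold Q2R; simpl; lra|].
    set (a := Qred _); set (b := BfQ n (r - 2) (s - 1)).
    assert (Ha : Q2R a = (Bf n (r - 1) s + Bf n (r - 1) (s - 1)) / 2).
    { unfold a; rewrite (Qeq_eqR _ _ (Qred_correct _)), Q2R_mult, Q2R_plus, !IH.
      unfold Q2R at 3; simpl; field. }
    rewrite <- Ha, IH; fold b.
    destruct (Qle_bool a b) eqn:Hab.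
    + apply Rmin_left, Qle_Rle, Qle_bool_iff, Hab.
    + apply Rmin_right, Qle_Rle, Qlt_le_weak, Qnot_le_lt.
      rewrite <- Qle_bool_iff, Hab; discriminate.
Qed.

Lemma B_ge_of_Qle r s (q : Q) (b : R) :
  Q2R q = b -> Qle_bool q (BQ r s) = true -> b <= B r s.
Proof.
  intros <- Hq; unfold B; rewrite Bf_Q2R.
  apply Qle_Rle, Qle_bool_iff, Hq.
Qed.

Ltac by_evaluation q :=
  apply (B_ge_of_Qle _ _ q); [unfold Q2R; cbn; field | vm_compute; reflexivity].

Definition defect_bound (x y : R) (r s : Z) : R :=
  x ^ Z.to_nat (r - 2 * s + 2) * y ^ Z.to_nat s.

Lemma defect_bound_of_nat x y r s e n :
  (r - 2 * s + 2)%Z = Z.of_nat e -> s = Z.of_nat n -> defect_bound x y r s = x ^ e * y ^ n.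
Proof. intros He ->; unfold defect_bound; rewrite He, !Nat2Z.id; reflexivity. Qed.

Lemma one_sub_Rmin_le x y t b1 b2 b3 :
  0 <= x -> x ^ 2 <= y * (2 * x - 1) -> 1 <= y -> 0 <= t ->
  1 - b1 <= t * y -> 1 - b2 <= t * x ^ 2 -> 1 - b3 <= t * x ->
  1 - Rmin ((b1 + b2) / 2) b3 <= t * x * y.
Proof.
  intros Hx Hxy Hy Ht H1 H2 H3; unfold Rmin; destruct (Rle_dec _ _).
  - assert (0 <= t * (y * (2 * x - 1) - x ^ 2)) by (apply Rmult_le_pos; lra). nra.
  - assert (0 <= t * x * (y - 1)) by (apply Rmult_le_pos; [apply Rmult_le_pos|]; lra). nra.
Qed.

Section Supersolution.

Variables x y : R.
Hypothesis x_gt_half : 1 / 2 < x.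
Hypothesis x_sq_le : x ^ 2 <= y * (2 * x - 1).

Let y_ge_1 : 1 <= y.
Proof. pose proof (pow2_ge_0 (x - 1)); nra. Qed.

Let defect_bound_nonneg r s : 0 <= defect_bound x y r s.
Proof. apply Rmult_le_pos; apply pow_le; lra. Qed.

Lemma one_sub_B_le_defect_bound r s : 1 - B r s <= defect_bound x y r s.
Proof.
  remember (Z.to_nat r) as N eqn:HN; revert r s HN.
  induction N as [N IH] using lt_wf_ind; intros r s HN.
  destruct (Z_le_gt_dec s 0) as [Hs|Hs].
  { rewrite B_eq, (proj2 (Z.leb_le _ _) Hs); pose proof (defect_bound_nonneg r s); lra. }
  destruct (Z_le_gt_dec (r - 2 * s + 2) 0) as [He|He].
  { assert (1 <= defect_bound x y r s).
    { unfold defect_bound; replace (Z.to_nat (r - 2 * s + 2)) with 0%nat by lia.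
      rewrite Rmult_1_l; apply pow_R1_Rle; lra. }
    pose proof (B_nonneg r s); lra. }
  assert (IH' : forall r' s', (r' < r)%Z -> 1 - B r' s' <= defect_bound x y r' s').
  { intros r' s' Hr'; apply (IH (Z.to_nat r')); [lia | reflexivity]. }
  rewrite B_eq, (proj2 (Z.leb_gt s 0)), (proj2 (Z.ltb_ge r s)) by lia.
  set (e := Z.to_nat (r - 2 * s + 1)); set (n := Z.to_nat (s - 1)).
  rewrite (defect_bound_of_nat x y r s (S e) (S n)) by lia.
  replace (x ^ S e * y ^ S n) with (x ^ e * y ^ n * x * y) by (simpl; ring).
  apply one_sub_Rmin_le; try lra; [apply Rmult_le_pos; apply pow_le; lra| | |].
  - eapply Rle_trans; [apply IH'; lia|].
    rewrite (defect_bound_of_nat x y (r - 1) s e (S n)) by lia; right; simpl; ring.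
  - eapply Rle_trans; [apply IH'; lia|].
    rewrite (defect_bound_of_nat x y (r - 1) (s - 1) (S (S e)) n) by lia; right; simpl; ring.
  - eapply Rle_trans; [apply IH'; lia|].
    rewrite (defect_bound_of_nat x y (r - 2) (s - 1) (S e) n) by lia; right; simpl; ring.
Qed.

Lemma B_diag_ge_of_bound k n b : x * (x ^ k * y) ^ n <= b ->
  1 - b <= B ((Z.of_nat k + 2) * Z.of_nat n - 1) (Z.of_nat n).
Proof.
  intros Hb; enough (1 - B ((Z.of_nat k + 2) * Z.of_nat n - 1) (Z.of_nat n) <= b) by lra.
  eapply Rle_trans; [apply one_sub_B_le_defect_bound|].
  rewrite (defect_bound_of_nat x y _ _ (k * n + 1) n) by lia.
  rewrite pow_add, pow_mult; rewrite Rpow_mult_distr in Hb; simpl; lra.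
Qed.

End Supersolution.

Lemma pow_le_pow_of_le_1 t m n : 0 <= t <= 1 -> (m <= n)%nat -> t ^ n <= t ^ m.
Proof.
  intros Ht Hmn; replace n with (m + (n - m))%nat by lia; rewrite pow_add.
  pose proof (pow_incr t 1 (n - m) Ht); rewrite pow1 in *.
  pose proof (pow_le t m (proj1 Ht)); nra.
Qed.

Lemma pow_le_pow_tail a b k0 k : 0 <= a <= b -> (k0 <= k)%nat -> a ^ k <= a ^ k0 * b ^ (k - k0).
Proof.
  intros Hab Hk; replace k with (k0 + (k - k0))%nat at 1 by lia; rewrite pow_add.
  apply Rmult_le_compat_l; [apply pow_le; lra | apply pow_incr, Hab].
Qed.

Lemma diag_bound_le_of_le x y k m n :
  0 <= x -> 0 <= x ^ k * y <= 1 -> (m <= n)%nat -> x * (x ^ k * y) ^ n <= x * (x ^ k * y) ^ m.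
Proof. intros Hx Ht Hmn; apply Rmult_le_compat_l, pow_le_pow_of_le_1; assumption. Qed.

Lemma diag_bound_le_half_pow x y n k0 k :
  0 <= x -> 0 <= y -> x ^ n <= / 2 -> x * y ^ n * (x ^ n) ^ k0 <= (/ 2) ^ S k0 ->
  (k0 <= k)%nat -> x * (x ^ k * y) ^ n <= (/ 2) ^ S k.
Proof.
  intros Hx Hy Hxn Hbase Hk.
  rewrite Rpow_mult_distr, <- pow_mult, Nat.mul_comm, pow_mult.
  replace (S k) with (S k0 + (k - k0))%nat by lia; rewrite pow_add.
  assert (Htail := pow_le_pow_tail (x ^ n) (/ 2) k0 k (conj (pow_le x n Hx) Hxn) Hk).
  pose proof (pow_le (/ 2) (k - k0) ltac:(lra)); pose proof (pow_le y n Hy).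
  pose proof (pow_le (x ^ n) k0 (pow_le x n Hx)); pose proof (pow_le (x ^ n) k (pow_le x n Hx)).
  apply Rle_trans with (x * y ^ n * (x ^ n) ^ k0 * (/ 2) ^ (k - k0)).
  - replace (x * ((x ^ n) ^ k * y ^ n)) with (x * y ^ n * (x ^ n) ^ k) by ring.
    replace (x * y ^ n * (x ^ n) ^ k0 * (/ 2) ^ (k - k0))
      with (x * y ^ n * ((x ^ n) ^ k0 * (/ 2) ^ (k - k0))) by ring.
    apply Rmult_le_compat_l; [apply Rmult_le_pos|]; assumption.
  - apply Rmult_le_compat_r; assumption.
Qed.

Lemma diag_bound_c3 n : (7 <= n)%nat -> 3 / 4 * ((3 / 4) ^ 1 * (9 / 8)) ^ n <= (/ 2) ^ 2.
Proof.
  intros Hn; eapply Rle_trans; [apply (diag_bound_le_of_le _ _ _ 7); [lra | simpl; lra | exact Hn]|].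
  simpl; lra.
Qed.

Lemma diag_bound_c4 n : (4 <= n)%nat -> 2 / 3 * ((2 / 3) ^ 2 * (4 / 3)) ^ n <= (/ 2) ^ 3.
Proof.
  intros Hn; eapply Rle_trans; [apply (diag_bound_le_of_le _ _ _ 4); [lra | simpl; lra | exact Hn]|].
  simpl; lra.
Qed.

Lemma diag_bound_c_ge5 k n : (3 <= k)%nat -> (3 <= n \/ n = 2 /\ 5 <= k)%nat ->
  5 / 8 * ((5 / 8) ^ k * (25 / 16)) ^ n <= (/ 2) ^ S k.
Proof.
  intros Hk [Hn | [-> Hk5]].
  - assert (Hxk : 0 <= (5 / 8) ^ k <= (5 / 8) ^ 3).
    { split; [apply pow_le; lra | apply pow_le_pow_of_le_1; [lra | exact Hk]]. }
    eapply Rle_trans; [apply (diag_bound_le_of_le _ _ _ 3); [lra | simpl in Hxk; nra | exact Hn]|].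
    apply (diag_bound_le_half_pow _ _ 3 3); [lra | lra | simpl; lra | simpl; lra | exact Hk].
  - apply (diag_bound_le_half_pow _ _ 2 5); [lra | lra | simpl; lra | simpl; lra | exact Hk5].
Qed.

Lemma B_diag_ge k n : (1 <= k)%nat -> (2 <= n)%nat ->
  1 - (/ 2) ^ S k <= B ((Z.of_nat k + 2) * Z.of_nat n - 1) (Z.of_nat n).
Proof.
  intros Hk Hn.
  destruct k as [|[|[|k]]]; [lia | | |].
  - destruct (le_lt_dec 7 n) as [Hn7|Hn7].
    + apply (B_diag_ge_of_bound (3 / 4) (9 / 8)); [lra | simpl; lra | apply diag_bound_c3, Hn7].
    + do 7 (destruct n as [|n]; [lia || by_evaluation (3 # 4)|]); lia.
  - destruct (le_lt_dec 4 n) as [Hn4|Hn4].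
    + apply (B_diag_ge_of_bound (2 / 3) (4 / 3)); [lra | simpl; lra | apply diag_bound_c4, Hn4].
    + do 4 (destruct n as [|n]; [lia || by_evaluation (7 # 8)|]); lia.
  - assert (Hcases : (3 <= n \/ n = 2 /\ 2 <= k \/ n = 2 /\ k < 2)%nat) by lia.
    destruct Hcases as [Hlarge | [Hlarge | [-> Hsmall]]].
    1, 2: apply (B_diag_ge_of_bound (5 / 8) (25 / 16)); [lra | simpl; lra |];
      apply diag_bound_c_ge5; lia.
    destruct k as [|[|k]]; [by_evaluation (15 # 16) | by_evaluation (31 # 32) | lia].
Qed.

Theorem mainTheorem20 : forall c s : Z, (3 <= c)%Z -> (2 <= s)%Z ->
  B (c * s - 1) s >= 1 - / 2 ^ (Z.to_nat (c - 1)).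
Proof.
  intros c s Hc Hs.
  replace c with (Z.of_nat (Z.to_nat (c - 2)) + 2)%Z by lia.
  replace s with (Z.of_nat (Z.to_nat s)) by lia.
  replace (Z.to_nat (Z.of_nat (Z.to_nat (c - 2)) + 2 - 1)) with (S (Z.to_nat (c - 2))) by lia.
  rewrite <- pow_inv; apply Rle_ge, B_diag_ge; lia.
Qed.
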